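(* For every $k\in\{1,\dots,n-1\}$, every $v\in\wedge^k H_1$ and every generator $\sigma_t\in B_n$ ($1\le t\le n-1$), \[\psi_k(\sigma_t\cdot v)=q^{k-1}\,\sigma_t\cdot\psi_k(v),\] where on the left $\sigma_t$ acts diagonally on $\wedge^kH_1$, i.e. $\sigma_t\cdot(x_1\wedge\cdots\wedge x_k)=(\sigma_t\cdot x_1)\wedge\cdots\wedge(\sigma_t\cdot x_k)$, and on the right $\sigma_t$ acts on $H_k\subset V^{\otimes n}$ via $\Phi$.
   Context: Let $U=U_q(\mathfrak{gl}(1|1))$ be the unital superalgebra over $\mathbb{C}(q)$ generated by odd elements $E,F$ and even elements $\mathbf q^h$ ($h\in P^*=\mathbb{Z}h_1\oplus\mathbb{Z}h_2$) with relations $\mathbf q^0=1$, $\mathbf q^h\mathbf q^{h'}=\mathbf q^{h+h'}$, $\mathbf q^hE=q^{\langle h,\alpha\rangle}E\mathbf q^h$, $\mathbf q^hF=q^{-\langle h,\alpha\rangle}F\mathbf q^h$, $EF+FE=\frac{K-K^{-1}}{q-q^{-1}}$ with $K=\mathbf q^{h_1+h_2}$, $E^2=F^2=0$; here $P=\mathbb{Z}\epsilon_1\oplus\mathbb{Z}\epsilon_2$ with $\{\epsilon_1,\epsilon_2\}$ dual to $\{h_1,h_2\}$ and $\alpha=\epsilon_1-\epsilon_2$. Comultiplication: $\Delta(E)=E\otimes K^{-1}+1\otimes E$, $\Delta(F)=F\otimes1+K\otimes F$, $\Delta(\mathbf q^h)=\mathbf q^h\otimes\mathbf q^h$; on tensor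 products one uses the Koszul sign rule $(X\otimes Y)(a\otimes b)=(-1)^{|Y||a|}Xa\otimes Yb$. $V$ has basis $v_0$ (even), $v_1$ (odd) with $Ev_0=0,Ev_1=v_0,Fv_0=v_1,Fv_1=0$, $\mathbf q^hv_0=q^{\langle h,\epsilon_1\rangle}v_0$, $\mathbf q^hv_1=q^{\langle h,\epsilon_2\rangle}v_1$. Fix $n\ge2$; $U$ acts on $V^{\otimes n}$ via iterated comultiplication. For $0\le k\le n-1$, $H_k=\{v\in V^{\otimes n}: Ev=0,\ \mathbf q^hv=q^{\langle h,(n-k)\epsilon_1+k\epsilon_2\rangle}v\ \forall h\in P^*\}$. Braid action: $\check R:V\otimes V\to V\otimes V$ is given by $\check R(v_0\otimes v_0)=qv_0\otimes v_0$, $\check R(v_1\otimes v_0)=v_0\otimes v_1$, $\check R(v_0\otimes v_1)=v_1\otimes v_0+(q-q^{-1})v_0\otimes v_1$, $\check R(v_1\otimes v_1)=-q^{-1}v_1\otimes v_1$; $\Phi(\sigma_t)=\mathrm{id}^{\otimes(t-1)}\otimes\check R\otimes\mathrm{id}^{\otimes(n-t-1)}$ defines an action $\Phi$ of $B_n$ on $V^{\otimes n}$ commuting with $U$, hence preserving each $H_k$; write $\sigma\cdot v=\Phi(\sigma)v$. For $1\le i\le n-1$ let $e_i=v_0^{\otimes(i-1)}\otimes(q^{-1}v_0\otimes v_1-v_1\otimes v_0)\otimes v_0^{\otimes(n-1-i)}$; these form a basis of $H_1$. For $1\le i\le n$ let $w_i=v_0^{\otimes(i-1)}\otimes v_1\otimes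 v_0^{\otimes(n-i)}$ and $U'=\mathrm{span}\{w_i\}$; note $e_i=-w_i+q^{-1}w_{i+1}$, so $H_1\subset U'$. Let $\psi:\wedge^*U'\to V^{\otimes n}$ be the $\mathbb{C}(q)$-linear map with $\psi(w_{i_1}\wedge\cdots\wedge w_{i_k})=v_{\alpha_1}\otimes\cdots\otimes v_{\alpha_n}$ for $i_1<\cdots<i_k$, where $\alpha_j=1$ if $j\in\{i_1,\dots,i_k\}$ and $\alpha_j=0$ otherwise. $\psi_k$ is the restriction of $\psi$ to $\wedge^kH_1$; it is an isomorphism $\wedge^kH_1\to H_k$. *)

From HB Require Import structures.
From mathcomp Require Import all_boot all_order all_algebra.
From mathcomp Require Import fraction.
From mathcomp Require Import complex.
From mathcomp Require Import Rstruct.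

Set Implicit Arguments.
Unset Strict Implicit.
Unset Printing Implicit Defensive.

Import Order.TTheory GRing.Theory Num.Theory.
Local Open Scope ring_scope.

Notation idx n := {ffun 'I_n -> bool}.
Notation tensor F n := {ffun {ffun 'I_n -> bool} -> F^o}.
Notation ext F n := {ffun {set 'I_n} -> F^o}.

Section Model.
Variables (F : fieldType) (q : F) (n : nat).
Local Notation idx := (idx n).
Local Notation tensor := (tensor F n).
Local Notation ext := (ext F n).

(* Basis of V^{(x)n}: v_{alpha_1} (x) ... (x) v_{alpha_n}, alpha : 'I_n -> bool
   (true = v_1, false = v_0).  Positions are 0-indexed: position j of the
   paper (1-indexed) is the ordinal of value j-1. *)

Definition basisT (a : idx) : tensor := [ffun b => (b == a)%:R].

(* bit of alpha at a (0-indexed, nat) position; false if out of range *)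
Definition bitn (a : idx) (m : nat) : bool := [exists i : 'I_n, (val i == m) && a i].

Definition swapn (m : nat) (a : idx) : idx :=
  [ffun i : 'I_n => if val i == m then bitn a m.+1
                    else if val i == m.+1 then bitn a m else a i].

(* Rcheck applied at tensor positions t, t+1 (1-indexed), i.e. 0-indexed
   t-1, t, on the basis vector e_alpha *)
Definition Rcheck_basis (t : nat) (a : idx) : tensor :=
  match bitn a t.-1, bitn a t with
  | false, false => q *: basisT a
  | true, false => basisT (swapn t.-1 a)
  | false, true => basisT (swapn t.-1 a) + (q - q^-1) *: basisT a
  | true, true => (- q^-1) *: basisT a
  end.

(* Phi(sigma_t) = id^{t-1} (x) Rcheck (x) id^{n-t-1}, extended linearly *)
Definition Phi (t : nat) (x : tensor) : tensor :=
  \sum_(a : idx) x a *: Rcheck_basis t a.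

(* Action of E on V^{(x)n} via the iterated coproduct
   sum_j 1^{(x) j} (x) E (x) (K^{-1})^{(x) (n-1-j)}, with Koszul signs;
   K acts by q on V. *)
Definition ones_before (a : idx) (j : 'I_n) : nat := #|[set i : 'I_n | (i < j)%N && a i]|.

Definition clear (a : idx) (j : 'I_n) : idx := [ffun i => if i == j then false else a i].

Definition E_basis (a : idx) : tensor :=
  \sum_(j : 'I_n | a j)
     ((-1) ^+ ones_before a j * q ^- (n.-1 - j)) *: basisT (clear a j).

Definition Eop (x : tensor) : tensor := \sum_(a : idx) x a *: E_basis a.

Definition nzeros (a : idx) : nat := #|[set i | ~~ a i]|.
Definition nones (a : idx) : nat := #|[set i | a i]|.

(* H_k = { v | E v = 0, q^h v = q^<h,(n-k) eps_1 + k eps_2> v for all h in P^* },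
   h = c1 h_1 + c2 h_2; q^h acts on e_alpha by q^(c1 * #zeros + c2 * #ones). *)
Definition inH (k : nat) (x : tensor) : Prop :=
  Eop x = 0 /\
  forall (c1 c2 : int) (a : idx),
    q ^ (c1 * (nzeros a)%:Z + c2 * (nones a)%:Z) * x a
    = q ^ (c1 * (n%:Z - k%:Z) + c2 * k%:Z) * x a.

(* U' = span { w_i }, w_i = e_{delta_i}; coordinate of x on w_i *)
Definition delta (i : 'I_n) : idx := [ffun j => j == i].
Definition coordU (x : tensor) (i : 'I_n) : F := x (delta i).

(* The exterior algebra wedge^* U', with basis w_I = w_{i_1} /\ ... /\ w_{i_k}
   (i_1 < ... < i_k) indexed by subsets I of 'I_n. *)

(* x_1 /\ ... /\ x_k for x_j in U': the coefficient on w_I (#|I| = k,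
   I = {i_1 < ... < i_k}) is det (coordU x_j i_l)_{j,l}. *)
Definition wedge (k : nat) (x : 'I_k -> tensor) : ext :=
  [ffun I : {set 'I_n} =>
     match #|I| =P k return F^o with
     | ReflectT e =>
         \det (\matrix_(j < k, l < k) coordU (x j) (enum_val (cast_ord (esym e) l)))
     | ReflectF _ => 0
     end].

(* psi(w_I) = v_{alpha_1} (x) ... (x) v_{alpha_n}, alpha = indicator of I *)
Definition psi (v : ext) : tensor := [ffun a : idx => v [set i | a i]].

End Model.

Definition Cq : fieldType := {fraction {poly (Rdefinitions.R)[i]}}.
Definition qC : Cq := FracField.tofrac ('X : {poly (Rdefinitions.R)[i]}).

From HB Require Import structures.
From mathcomp Require Import all_boot all_order all_algebra.
From mathcomp Require Import fraction complex Rstruct.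
From mathcomp Require Import perm zify ring.
Import GRing.Theory.
Local Open Scope ring_scope.
Set Implicit Arguments.
Unset Strict Implicit.

(* Let P = t-1 and P1 = t (0-indexed). On U', Phi(sigma_t) multiplies the
   coordinate at every position outside {P, P1} by q and acts on the pair
   (P, P1) through the 2x2 block of Rcheck. The coefficient of w_I in
   x_1 /\ ... /\ x_k is the minor of the coordinate matrix on the columns I, so
   applying sigma_t to every x_j scales the columns of I outside {P, P1} by q and
   recombines those at P and P1. Multilinearity (and alternation when both lie
   in I) turns this into q^(k-1) times the coefficient that Rcheck assigns to
   the basis tensor indexed by I. As P and P1 are adjacent, swapping them keeps
   the increasing enumeration of I when exactly one of them lies in I. *)

Lemma sorted_enum_ord m : sorted (fun i j : 'I_m => (i < j)%N) (enum 'I_m).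
Proof. by have := iota_ltn_sorted 0 m; rewrite -val_enum_ord sorted_map. Qed.

Section EnumSet.
Variables (n k : nat) (S : {set 'I_n}) (e : #|S| = k).

Definition enum_at (l : 'I_k) : 'I_n := enum_val (cast_ord (esym e) l).

Let ltn_trans_ord : transitive (fun i j : 'I_n => (i < j)%N).
Proof. by move=> a b c; apply: ltn_trans. Qed.

Lemma sorted_enum_set : sorted (fun i j : 'I_n => (i < j)%N) (enum S).
Proof.
rewrite /enum_mem -enumT.
by apply: sorted_filter; [exact: ltn_trans_ord | exact: sorted_enum_ord].
Qed.

Lemma enum_at_mem l : enum_at l \in S.
Proof. exact: enum_valP. Qed.

Lemma enum_at_inj : injective enum_at.
Proof. by move=> l1 l2 /enum_val_inj /cast_ord_inj. Qed.

Lemma codom_enum_at : codom enum_at =i S.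
Proof.
move=> i; apply/codomP/idP => [[l ->]|iS]; first exact: enum_at_mem.
by exists (cast_ord e (enum_rank_in iS i)); rewrite /enum_at cast_ordK enum_rankK_in.
Qed.

Lemma enum_at_mono (l1 l2 : 'I_k) : (l1 < l2)%N -> (enum_at l1 < enum_at l2)%N.
Proof.
move=> lt12; rewrite /enum_at !(enum_val_nth (enum_at l1)).
apply: (sorted_ltn_nth ltn_trans_ord) => //; first exact: sorted_enum_set.
all: by rewrite inE /= -cardE e.
Qed.

Lemma enum_atP (h : 'I_k -> 'I_n) :
  (forall l, h l \in S) -> {homo h : l1 l2 / (l1 < l2)%N} -> h =1 enum_at.
Proof.
move=> hS hincr l.
have hsorted : sorted (fun i j : 'I_n => (i < j)%N) (map h (enum 'I_k)).
  by rewrite sorted_map; exact: sub_sorted (sorted_enum_ord k).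
have irr : irreflexive (fun i j : 'I_n => (i < j)%N) by move=> a; rewrite /= ltnn.
have hsub : {subset map h (enum 'I_k) <= enum S}.
  by move=> y /mapP[l' _ ->]; rewrite mem_enum.
have [|_ hS'] := uniq_min_size (sorted_uniq ltn_trans_ord irr hsorted) hsub.
  by rewrite size_map size_enum_ord -cardE e.
rewrite /enum_at (enum_val_nth (h l)).
have -> : enum S = map h (enum 'I_k).
  exact/esym/(irr_sorted_eq ltn_trans_ord irr hsorted sorted_enum_set).
have -> : nat_of_ord (cast_ord (esym e) l) = l by [].
by rewrite (nth_map l) ?size_enum_ord // nth_ord_enum.
Qed.

End EnumSet.

Lemma det_col_lin (R : comPzRingType) k (A B C : 'M[R]_k) l0 (b c : R) :
  (forall j, A j l0 = b * B j l0 + c * C j l0) ->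
  (forall j l, l != l0 -> B j l = A j l) ->
  (forall j l, l != l0 -> C j l = A j l) ->
  \det A = b * \det B + c * \det C.
Proof.
move=> hl0 hB hC; rewrite -det_tr -(det_tr B) -(det_tr C).
apply: (determinant_multilinear (i0 := l0)).
- by apply/rowP => j; rewrite !mxE hl0.
- by apply/matrixP => i j; rewrite !mxE hB // eq_sym neq_lift.
- by apply/matrixP => i j; rewrite !mxE hC // eq_sym neq_lift.
Qed.

Lemma det_scale_cols (R : comPzRingType) k (A : 'M[R]_k) (d : 'I_k -> R) :
  \det (\matrix_(j, l) (A j l * d l)) = \det A * \prod_l d l.
Proof.
have -> : \matrix_(j, l) (A j l * d l) = A *m diag_mx (\row_l d l).
  by apply/matrixP => j l; rewrite mul_mx_diag !mxE.
by rewrite det_mulmx det_diag; under eq_bigr do rewrite mxE.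
Qed.

Lemma prod_if_mem (R : comPzRingType) k (A : {set 'I_k}) (x : R) :
  \prod_l (if l \in A then 1 else x) = x ^+ (k - #|A|).
Proof.
rewrite (bigID (mem A)) /= big1 => [|l ->] //; rewrite mul1r.
rewrite (eq_bigr (fun=> x)) => [|l /negPf ->] //; rewrite prodr_const.
by have /(congr1 (subn^~ #|A|)) := cardC A; rewrite card_ord addKn => <-.
Qed.

Section Minors.
Variables (F : fieldType) (n k : nat).
Implicit Types (y : 'I_k -> tensor F n) (f : 'I_k -> 'I_n).

Definition minor y f : F := \det (\matrix_(j, l) coordU (y j) (f l)).

Lemma wedge_minor y (S : {set 'I_n}) (e : #|S| = k) : wedge y S = minor y (enum_at e).
Proof. by rewrite ffunE; case: eqP => // e'; rewrite (eq_irrelevance e e'). Qed.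

Lemma wedge_card y (S : {set 'I_n}) : #|S| != k -> wedge y S = 0.
Proof. by move=> ne; rewrite ffunE; case: eqP => // e; rewrite e eqxx in ne. Qed.

Lemma eq_minor y f1 f2 : f1 =1 f2 -> minor y f1 = minor y f2.
Proof. by move=> eqf; congr (\det _); apply/matrixP => j l; rewrite !mxE eqf. Qed.

Lemma minor_eq0 y f l0 l1 : l0 != l1 -> f l0 = f l1 -> minor y f = 0.
Proof.
move=> l01 fl01; rewrite /minor -det_tr.
by apply: (determinant_alternate l01) => j; rewrite !mxE fl01.
Qed.

Lemma minor_tperm y f l0 l1 :
  l0 != l1 -> minor y (f \o tperm l0 l1) = - minor y f.
Proof.
move=> l01; rewrite /minor.
have -> : \matrix_(j, l) coordU (y j) ((f \o tperm l0 l1) l)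
    = xcol l0 l1 (\matrix_(j, l) coordU (y j) (f l)).
  by apply/matrixP => j l; rewrite !mxE.
by rewrite xcolE det_mulmx det_perm odd_tperm l01 mulrN1.
Qed.

End Minors.

Definition idx_perm n (s : {perm 'I_n}) (a : idx n) : idx n := [ffun i => a (s i)].

(* Rcheck (v_b0 (x) v_b1) = Rdiag q b0 b1 (v_b0 (x) v_b1)
                            + [b0 != b1] (v_b1 (x) v_b0). *)
Definition Rdiag (F : fieldType) (q : F) (b0 b1 : bool) : F :=
  match b0, b1 with
  | false, false => q
  | false, true => q - q^-1
  | true, false => 0
  | true, true => - q^-1
  end.

Lemma bitnE n (a : idx n) (i : 'I_n) : bitn a i = a i.
Proof.
apply/existsP/idP => [[i' /andP[/eqP /val_inj -> //]]|ai].
by exists i; rewrite eqxx.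
Qed.

Section PhiAdjacent.
Variables (F : fieldType) (q : F) (n : nat) (P P1 : 'I_n).
Hypothesis P1_succ : P1 = P.+1 :> nat.
Local Notation g := (tperm P P1).

Lemma neq_adjacent : P != P1.
Proof. by rewrite -(inj_eq val_inj) /= P1_succ eqn_leq ltnn andbF. Qed.

Lemma swapnE (a : idx n) : swapn P a = idx_perm g a.
Proof.
apply/ffunP => i; rewrite !ffunE -P1_succ !bitnE !val_eqE.
case: (tpermP P P1 i) => [->|->|/eqP/negPf -> /eqP/negPf ->] //.
  by rewrite eqxx.
by rewrite eq_sym (negPf neq_adjacent) eqxx.
Qed.

Lemma Rcheck_basisE (a : idx n) :
  Rcheck_basis q P1 a = Rdiag q (a P) (a P1) *: basisT F a
                        + (a P != a P1)%:R *: basisT F (idx_perm g a).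
Proof.
rewrite /Rcheck_basis P1_succ /= -P1_succ !bitnE swapnE.
by case: (a P) (a P1) => [] [] /=; rewrite ?scale0r ?scale1r ?addr0 ?add0r // addrC.
Qed.

Lemma Phi_coord (y : tensor F n) (b : idx n) :
  Phi q P1 y b = Rdiag q (b P) (b P1) * y b + (b P != b P1)%:R * y (idx_perm g b).
Proof.
have swap_eq a : (b == idx_perm g a) = (a == idx_perm g b).
  by apply/eqP/eqP => ->; apply/ffunP => i; rewrite !ffunE tpermK.
rewrite /Phi sum_ffunE.
have scaleE (u v : F^o) : u *: v = u * v by [].
under eq_bigr => a _ do
  rewrite Rcheck_basisE !ffunE swap_eq !scaleE mulrDr !mulrA -!(mulrC (_ == _)%:R).
rewrite big_split /= (bigD1 b) // big1 => [|a /negPf ab]; last by rewrite eq_sym ab mul0r.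
rewrite (bigD1 (idx_perm g b)) //= big1 => [|a /negPf ->]; last by rewrite mul0r.
rewrite !eqxx !mul1r !addr0 !ffunE tpermL tpermR eq_sym.
by rewrite mulrC [_ * y _]mulrC.
Qed.

Lemma coordU_Phi (y : tensor F n) i :
  coordU (Phi q P1 y) i =
    if i == P then coordU y P1
    else if i == P1 then coordU y P + (q - q^-1) * coordU y P1
    else q * coordU y i.
Proof.
rewrite /coordU Phi_coord.
have -> : idx_perm g (delta i) = delta (g i).
  by apply/ffunP => j; rewrite !ffunE -{1}(tpermK P P1 i) (inj_eq perm_inj).
rewrite !ffunE !(eq_sym _ i).
case: (eqVneq i P) => [->|iP].
  by rewrite (negPf neq_adjacent) tpermL /= mul0r mul1r add0r.
case: (eqVneq i P1) => [->|iP1] /=; first by rewrite tpermR mul1r addrC.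
by rewrite mul0r addr0.
Qed.

Section MinorPhi.
Variables (k : nat) (y : 'I_k -> tensor F n) (f : 'I_k -> 'I_n).
Hypothesis f_inj : injective f.

Let codom_neq i l : i \notin codom f -> f l != i.
Proof. by move/memPn; apply; apply: codom_f. Qed.

(* [Phi] scales every coordinate of U' by [q] except those at [P] and [P1];
   [Mq] is the matrix of the minor with these factors [q] stripped off. *)
Let Mq := \matrix_(j, l)
  (if f l == P then coordU (y j) P1
   else if f l == P1 then coordU (y j) P + (q - q^-1) * coordU (y j) P1
   else coordU (y j) (f l)).

Lemma minor_Phi_factor :
  minor (fun j => Phi q P1 (y j)) f = q ^+ (k - #|f @^-1: [set P; P1]|) * \det Mq.
Proof.
rewrite -prod_if_mem mulrC -det_scale_cols; congr (\det _).
apply/matrixP => j l; rewrite !mxE coordU_Phi !inE.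
by case: (f l == P); case: (f l == P1); rewrite ?mulr1 // mulrC.
Qed.

Lemma det_Mq_notP1 : P1 \notin codom f -> \det Mq = minor y (g \o f).
Proof.
move=> P1f; congr (\det _); apply/matrixP => j l; rewrite !mxE.
rewrite (negPf (codom_neq l P1f)) /=.
case: (eqVneq (f l) P) => [->|fP]; first by rewrite tpermL.
by rewrite tpermD // eq_sym // codom_neq.
Qed.

Lemma det_Mq_P1 l1 : f l1 = P1 ->
  \det Mq = minor y (g \o f)
           + (q - q^-1) * minor y (fun l => if l == l1 then P1 else g (f l)).
Proof.
move=> fl1.
have Mq_off j l : l != l1 -> Mq j l = coordU (y j) (g (f l)).
  move=> ll1; rewrite mxE.
  have /negPf -> : f l != P1 by rewrite -fl1 (inj_eq f_inj).
  case: (eqVneq (f l) P) => [->|fP]; first by rewrite tpermL.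
  by rewrite tpermD // eq_sym -?fl1 ?(inj_eq f_inj).
rewrite -[minor y _]mul1r; apply: (det_col_lin (l0 := l1)).
- move=> j; rewrite !mxE eqxx /= fl1 eq_sym (negPf neq_adjacent) eqxx.
  by rewrite tpermR mul1r.
- by move=> j l ll1; rewrite Mq_off // mxE.
- by move=> j l ll1; rewrite Mq_off // mxE (negPf ll1).
Qed.

Lemma card_preim_adjacent :
  #|f @^-1: [set P; P1]| = ((P \in codom f) + (P1 \in codom f))%N.
Proof.
have card_preim1 i : #|f @^-1: [set i]| = (i \in codom f).
  case: (boolP (i \in codom f)) => [/codomP[l ->]|ni].
    rewrite (_ : _ @^-1: _ = [set l]) ?cards1 //.
    by apply/setP => l'; rewrite !inE (inj_eq f_inj).
  apply/eqP; rewrite cards_eq0; apply/eqP/setP => l.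
  by rewrite !inE (negPf (codom_neq l ni)).
rewrite setUC preimsetU cardsU -preimsetI -!card_preim1.
suff -> : [set P1] :&: [set P] = set0 by rewrite preimset0 cards0 subn0 addnC.
by apply/setP => i; rewrite !inE; case: eqP => // ->; rewrite eq_sym (negPf neq_adjacent).
Qed.

Lemma minor_tperm_adjacent l0 l1 :
  f l0 = P -> f l1 = P1 -> minor y (g \o f) = - minor y f.
Proof.
move=> fl0 fl1; have l01 : l0 != l1.
  by apply: contra_neq neq_adjacent => l01; rewrite -fl0 -fl1 l01.
rewrite -(minor_tperm y f l01); apply: eq_minor => l /=.
case: (tpermP l0 l1 l) => [->|->|ll0 ll1]; rewrite ?fl0 ?fl1 ?tpermL ?tpermR //.
by rewrite tpermD // -?fl0 -?fl1 (inj_eq f_inj) eq_sym; apply/eqP.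
Qed.

Lemma minor_Phi : q != 0 -> (0 < k)%N ->
  minor (fun j => Phi q P1 (y j)) f = q ^+ k.-1 *
    (Rdiag q (P \in codom f) (P1 \in codom f) * minor y f
     + ((P \in codom f) != (P1 \in codom f))%:R * minor y (g \o f)).
Proof.
move=> q0 k0; rewrite minor_Phi_factor card_preim_adjacent.
case: (boolP (P1 \in codom f)) => [/codomP[l1 /esym fl1]|P1f].
  rewrite (det_Mq_P1 fl1); case: (boolP (P \in codom f)) => [/codomP[l0 /esym fl0]|Pf] /=.
    have l01 : l0 != l1 by apply: contra_neq neq_adjacent => l01; rewrite -fl0 -fl1 l01.
    have -> : minor y (fun l => if l == l1 then P1 else g (f l)) = 0.
      by apply: (minor_eq0 _ l01); rewrite /= eqxx (negPf l01) fl0 tpermL.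
    rewrite (minor_tperm_adjacent fl0 fl1).
    have k2 : (1 < k)%N by have := max_card [set l0; l1]; rewrite cards2 l01 card_ord.
    have -> : k.-1 = (k - 2).+1 by lia.
    by rewrite exprS /=; field.
  have -> : minor y (fun l => if l == l1 then P1 else g (f l)) = minor y f.
    apply: eq_minor => l; case: eqP => [->|/eqP ll1] //.
    have fP := codom_neq l Pf.
    by rewrite tpermD // eq_sym // -fl1 (inj_eq f_inj).
  by rewrite add0n subn1 mul1r addrC.
rewrite det_Mq_notP1 //; case: (boolP (P \in codom f)) => [_|Pf] /=.
  by rewrite addn0 subn1 mul0r add0r mul1r.
have -> : minor y (g \o f) = minor y f.
  by apply: eq_minor => l /=; rewrite tpermD // eq_sym codom_neq.
by rewrite subn0 mul0r addr0 mulrA -exprSr prednK.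
Qed.

End MinorPhi.

Lemma val_tperm_adjacent i :
  val (g i) = if i == P then val P1 else if i == P1 then val P else val i.
Proof.
case: (tpermP P P1 i) => [->|->|iP iP1]; first by rewrite eqxx.
  by rewrite eq_sym (negPf neq_adjacent) eqxx.
by rewrite (introF eqP iP) (introF eqP iP1).
Qed.

Lemma tperm_adjacent_ltn (u v : 'I_n) :
  (u < v)%N -> ~~ ((u == P) && (v == P1)) -> (g u < g v)%N.
Proof.
rewrite !val_tperm_adjacent -!(inj_eq val_inj) /= P1_succ.
by do !case: eqP; lia.
Qed.

Lemma wedge_Phi k (x : 'I_k -> tensor F n) (S : {set 'I_n}) :
  q != 0 -> (0 < k)%N ->
  wedge (fun j => Phi q P1 (x j)) S = q ^+ k.-1 *
    (Rdiag q (P \in S) (P1 \in S) * wedge x S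
     + ((P \in S) != (P1 \in S))%:R * wedge x (g @^-1: S)).
Proof.
move=> q0 k0; have cardg : #|g @^-1: S| = #|S| := card_preimset _ perm_inj.
case: (eqVneq #|S| k) => [e|ne]; last by rewrite !wedge_card ?cardg // !mulr0 addr0 mulr0.
rewrite !(wedge_minor _ e) minor_Phi //; last exact: enum_at_inj.
rewrite !codom_enum_at; congr (_ * (_ + _)).
case: (boolP ((P \in S) != (P1 \in S))) => [PS|_]; last by rewrite !mul0r.
rewrite (wedge_minor x (etrans cardg e)); congr (_ * _); apply: eq_minor.
apply: enum_atP => [l|l1 l2 lt12 /=]; first by rewrite inE tpermK enum_at_mem.
apply: tperm_adjacent_ltn; first exact: enum_at_mono.
by apply: contra PS => /andP[/eqP <- /eqP <-]; rewrite !enum_at_mem.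
Qed.

End PhiAdjacent.

Theorem proposition1p3 (n : nat) (hn : (2 <= n)%N)
  (k : nat) (hk : (1 <= k <= n.-1)%N)
  (t : nat) (ht : (1 <= t <= n.-1)%N)
  (N : nat) (x : 'I_N -> 'I_k -> tensor Cq n)
  (hx : forall m j, inH qC 1 (x m j)) :
  psi (\sum_(m < N) wedge (fun j => Phi qC t (x m j)))
  = qC ^+ k.-1 *: Phi qC t (psi (\sum_(m < N) wedge (x m))).
Proof.
(* The identity holds on all of wedge^k U'. *)
have q0 : qC != 0 by rewrite tofrac_eq0 polyX_eq0.
have k0 : (0 < k)%N by lia.
have tn : (t < n)%N by lia.
have tn' : (t.-1 < n)%N by lia.
pose P : 'I_n := Ordinal tn'; pose P1 : 'I_n := Ordinal tn.
have P1_succ : P1 = P.+1 :> nat by rewrite /= prednK //; lia.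
change t with (nat_of_ord P1); apply/ffunP => a.
rewrite ffunE sum_ffunE !ffunE (Phi_coord _ P1_succ) !ffunE !sum_ffunE.
under eq_bigr do rewrite (wedge_Phi P1_succ _ _ q0 k0).
rewrite -mulr_sumr big_split -!mulr_sumr /= !inE.
suff -> : [set i | idx_perm (tperm P P1) a i] = tperm P P1 @^-1: [set i | a i] by [].
by apply/setP => i; rewrite !inE ffunE.
Qed.
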